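(* Let $G=\bigl((f_j)_{j=1}^n;(\mu^{R})_{\emptyset\ne R\subseteq[n]}\bigr)$ be an $n$-resource selection game. If $f_1,\ldots,f_n$ are continuous, then a strong Nash equilibrium exists in $G$.
   Context: Write $[n]=\{1,\ldots,n\}$ and $\mathbb{R}_{\ge}=[0,\infty)$. An $n$-resource selection game is a pair $G=\bigl((f_j)_{j=1}^n;(\mu^{R})_{\emptyset\ne R\subseteq[n]}\bigr)$ where each $f_j:\mathbb{R}_{\ge}\to\mathbb{R}$ is nondecreasing and $\mu^R\in\mathbb{R}_{\ge}$ for every nonempty $R\subseteq[n]$ (the mass of players of type $R$, who may use only resources in $R$). A consumption profile is a map $s$ assigning to each nonempty $R\subseteq[n]$ a vector $s(R)\in\mathbb{R}_{\ge}^{[n]}$ with $s_j(R)=0$ for $j\notin R$ and $\sum_{j}s_j(R)=\mu^R$. The load of resource $j$ is $\mu^s_j=\sum_{R}s_j(R)$ and its cost is $h^s_j=f_j(\mu^s_j)$. $s$ is a Nash equilibrium if for every nonempty $R$, every $k$ with $s_k(R)>0$ and every $j\in R$, $h^s_k\le h^s_j$. For a Nash equilibrium $s$ and $R$ with $\mu^R>0$, let $h^R=h^s_k$ for any $k$ with $s_k(R)>0$ (well defined). A Nash equilibrium $s$ is a strong Nash equilibrium if there is no consumption profile $s'\ne s$ such that for every nonempty $R$ and every $k$ with $s'_k(R)>s_k(R)$ one has $h^{s'}_k<h^R$. *)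

From Stdlib Require Import Reals.
From mathcomp Require Import all_boot.
Set Implicit Arguments. Unset Strict Implicit. Unset Printing Implicit Defensive.

Local Open Scope R_scope.

(* Resources are indexed by 'I_n (i.e. 0..n-1 instead of 1..n);
   player types are nonempty subsets R : {set 'I_n}. *)

Definition nondecr_nonneg (f : R -> R) : Prop :=
  forall x y : R, 0 <= x -> x <= y -> f x <= f y.

Definition continuous_nonneg (f : R -> R) : Prop :=
  forall x : R, 0 <= x -> forall eps : R, 0 < eps ->
    exists delta : R, 0 < delta /\
      forall y : R, 0 <= y -> Rabs (y - x) < delta -> Rabs (f y - f x) < eps.

Definition is_game (n : nat) (f : 'I_n -> R -> R) (mu : {set 'I_n} -> R) : Prop :=
  (forall j, nondecr_nonneg (f j)) /\
  (forall S : {set 'I_n}, S != set0 -> 0 <= mu S).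

(* consumption profile: only the values on nonempty S are meaningful *)
Definition is_profile (n : nat) (mu : {set 'I_n} -> R)
    (s : {set 'I_n} -> 'I_n -> R) : Prop :=
  forall S : {set 'I_n}, S != set0 ->
    (forall j, 0 <= s S j) /\
    (forall j, j \notin S -> s S j = 0) /\
    \big[Rplus/0]_(j : 'I_n) s S j = mu S.

Definition load (n : nat) (s : {set 'I_n} -> 'I_n -> R) (j : 'I_n) : R :=
  \big[Rplus/0]_(S : {set 'I_n} | S != set0) s S j.

Definition cost (n : nat) (f : 'I_n -> R -> R) (s : {set 'I_n} -> 'I_n -> R)
    (j : 'I_n) : R := f j (load s j).

Definition is_NE (n : nat) (f : 'I_n -> R -> R) (mu : {set 'I_n} -> R)
    (s : {set 'I_n} -> 'I_n -> R) : Prop :=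
  is_profile mu s /\
  forall S : {set 'I_n}, S != set0 ->
    forall k j : 'I_n, 0 < s S k -> j \in S -> cost f s k <= cost f s j.

(* s' is a profitable coalitional deviation from s: s' differs from s (on some
   nonempty type), and every resource k receiving more mass of type S under s'
   has cost under s' strictly below h^S (the equilibrium cost of type S under s,
   i.e. the cost of some resource used by type S under s). *)
Definition is_SNE (n : nat) (f : 'I_n -> R -> R) (mu : {set 'I_n} -> R)
    (s : {set 'I_n} -> 'I_n -> R) : Prop :=
  is_NE f mu s /\
  ~ exists s' : {set 'I_n} -> 'I_n -> R,
      is_profile mu s' /\
      (exists (S : {set 'I_n}) (j : 'I_n), S != set0 /\ s' S j <> s S j) /\
      forall S : {set 'I_n}, S != set0 -> forall k : 'I_n,
        s S k < s' S k ->
        exists k' : 'I_n, 0 < s S k' /\ cost f s' k < cost f s k'.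

From Stdlib Require Import Reals Lra Classical.
From Coquelicot Require Coquelicot.
From mathcomp Require Import all_boot all_order all_algebra.
From mathcomp Require Import classical_sets reals topology normedtype.
From mathcomp Require Import derive Rstruct Rstruct_topology.

(* A minimiser of the Beckmann potential
     sum_j int_0^(load j) f_j
   exists: the potential is continuous and profiles form a compact set. Moving a
   little mass of a type from a costlier to a cheaper resource of that type would
   lower the potential, so the minimiser is a Nash equilibrium.

   Every Nash equilibrium [s] is strong. Under a profitable deviation [s'], a
   resource receiving more mass of a type ends up cheaper than that type's
   equilibrium cost, which is at most its own old cost; costs being
   nondecreasing, its load strictly drops. Hence no load increases; as the total
   mass is conserved, no load changes at all, so no resource receives more mass
   of any type, and [s' = s]. *)

Set Implicit Arguments. Unset Strict Implicit. Unset Printing Implicit Defensive.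
Import Order.TTheory GRing.Theory Num.Theory.

(* [classical_sets] also exports a [set0]; ours are finite sets. *)
Local Notation set0 := (@finset.set0 _).

(* Coquelicot is only imported locally: its [continuous], [locally], ... clash
   with MathComp-Analysis. *)
Module Primitive.
Import Coquelicot.Coquelicot.
Local Open Scope R_scope.

Section NondecreasingIntegrand.
Variable g : R -> R.
Hypothesis g_nondecr : forall x y, x <= y -> g x <= g y.
Hypothesis g_cont : forall x, continuity_pt g x.

Definition primitive (x : R) : R := RInt g 0 x.

Let ex_RInt_g a b : ex_RInt g a b.
Proof. by apply: ex_RInt_continuous => z _; apply/continuity_pt_filterlim. Qed.

Let RInt_cst (c a b : R) : RInt (fun _ => c) a b = (b - a) * c.
Proof. exact: RInt_const. Qed.

Let ex_RInt_cst (c a b : R) : ex_RInt (fun _ => c) a b.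
Proof. exact: ex_RInt_continuous (fun _ _ => continuous_const _ _). Qed.

Lemma RInt_ge_lower a b : a <= b -> (b - a) * g a <= RInt g a b.
Proof.
move=> ab; rewrite -RInt_cst; apply: RInt_le => // x [ax _].
by apply: g_nondecr; lra.
Qed.

Lemma RInt_le_upper a b : a <= b -> RInt g a b <= (b - a) * g b.
Proof.
move=> ab; rewrite -RInt_cst; apply: RInt_le => // x [_ xb].
by apply: g_nondecr; lra.
Qed.

Lemma primitive_sub_le a b : primitive b - primitive a <= (b - a) * g b.
Proof.
have -> : primitive b - primitive a = RInt g a b.
  by rewrite /primitive -(RInt_Chasles g 0 a b) // /plus /=; ring.
have [ab|ba] := Rle_lt_dec a b; first exact: RInt_le_upper.
rewrite -opp_RInt_swap // /opp /=.
by have := RInt_ge_lower (Rlt_le _ _ ba); lra.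
Qed.

Lemma continuity_pt_primitive x : continuity_pt primitive x.
Proof.
apply/continuity_pt_filterlim/ex_derive_continuous; exists (g x).
apply: is_derive_RInt; last exact/continuity_pt_filterlim.
by apply: filter_forall => y; exact: RInt_correct.
Qed.

End NondecreasingIntegrand.
End Primitive.

Local Open Scope R_scope.

Section CostIntegral.
Variable f : R -> R.

Lemma nondecr_clamp :
  nondecr_nonneg f -> forall x y, x <= y -> f (Rmax 0 x) <= f (Rmax 0 y).
Proof. by move=> f_nd x y xy; apply: f_nd; [exact: Rmax_l | exact: Rle_max_compat_l]. Qed.

Lemma continuity_pt_clamp :
  continuous_nonneg f -> forall x, continuity_pt (fun t => f (Rmax 0 t)) x.
Proof.
move=> f_cont x e e0; have [d [d0 fd]] := f_cont (Rmax 0 x) (Rmax_l _ _) e e0.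
exists d; split => // y [_ yx]; apply: fd; first exact: Rmax_l.
move: yx; rewrite /dist /= /R_dist /Rmax /Rabs.
by repeat destruct Rle_dec; repeat destruct Rcase_abs; lra.
Qed.

(* The term of resource [f] in the Beckmann potential; clamping at [0] makes the
   integrand continuous on all of [R]. *)
Definition cost_integral (x : R) : R := Primitive.primitive (fun t => f (Rmax 0 t)) x.

Hypotheses (f_nd : nondecr_nonneg f) (f_cont : continuous_nonneg f).

Lemma cost_integral_sub_le a b : 0 <= b ->
  cost_integral b - cost_integral a <= (b - a) * f b.
Proof.
move=> b0; rewrite -[in f b](Rmax_right 0 b b0).
exact: (Primitive.primitive_sub_le (nondecr_clamp f_nd) (continuity_pt_clamp f_cont)).
Qed.

Lemma continuous_cost_integral : continuous cost_integral.
Proof.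
move=> x; apply/continuity_ptE.
exact: Primitive.continuity_pt_primitive (continuity_pt_clamp f_cont) x.
Qed.

End CostIntegral.

Lemma Rsum_ge0 (I : finType) (P : pred I) (F : I -> R) :
  (forall i, P i -> 0 <= F i) -> 0 <= \big[Rplus/0]_(i | P i) F i.
Proof. by move=> F0; apply/RleP/sumr_ge0 => i Pi; apply/RleP/F0. Qed.

Lemma Rsum_le (I : finType) (P : pred I) (F G : I -> R) :
  (forall i, P i -> F i <= G i) ->
  \big[Rplus/0]_(i | P i) F i <= \big[Rplus/0]_(i | P i) G i.
Proof. by move=> FG; apply/RleP/ler_sum => i Pi; apply/RleP/FG. Qed.

Lemma Rsum_le_eq_pointwise (I : finType) (F G : I -> R) :
  (forall i, F i <= G i) -> \big[Rplus/0]_i F i = \big[Rplus/0]_i G i ->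
  forall i, F i = G i.
Proof.
move=> FG sumFG i; apply/eqP; rewrite eq_sym -subr_eq0; apply/eqP.
apply: (@psumr_eq0P _ _ predT (fun l => G l - F l)) => // [l _|].
  by rewrite subr_ge0; apply/RleP.
by rewrite sumrB sumFG subrr.
Qed.

Lemma Rsum_indicator (I : finType) (j : I) (F : I -> R) :
  \big[Rplus/0]_i (if i == j then F i else 0) = F j.
Proof. by rewrite -big_mkcond big_pred1_eq. Qed.

Section Profiles.
Variables (n : nat) (mu : {set 'I_n} -> R).

Lemma load_ge0 s j : is_profile mu s -> 0 <= load s j.
Proof. by move=> s_prof; apply: Rsum_ge0 => S S0; exact: (s_prof S S0).1. Qed.

Lemma le_load s S k : is_profile mu s -> S != set0 -> s S k <= load s k.
Proof.
move=> s_prof S0; rewrite /load (bigD1 S) //= -{1}(Rplus_0_r (s S k)).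
by apply/Rplus_le_compat_l/Rsum_ge0 => S' /andP[S'0 _]; exact: (s_prof S' S'0).1.
Qed.

Lemma sum_load s : is_profile mu s ->
  \big[Rplus/0]_j load s j = \big[Rplus/0]_(S | S != set0) mu S.
Proof.
move=> s_prof; rewrite /load exchange_big /=.
by apply: eq_bigr => S S0; case: (s_prof S S0) => _ [].
Qed.

Definition transfer (s : {set 'I_n} -> 'I_n -> R) S k j e S' i : R :=
  if S' == S then s S i + ((if i == j then e else 0) - (if i == k then e else 0))
  else s S' i.

Lemma load_transfer s S k j e i : S != set0 ->
  load (transfer s S k j e) i =
  load s i + ((if i == j then e else 0) - (if i == k then e else 0)).
Proof.
move=> S0; rewrite /load (bigD1 S) // [in RHS](bigD1 S) //= /transfer eqxx.
rewrite (eq_bigr (fun S' => s S' i)) => [|S' /andP[_ /negbTE ->] //].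
ring.
Qed.

Lemma transfer_profile s S k j e : is_profile mu s -> S != set0 ->
  k \in S -> j \in S -> 0 <= e <= s S k -> is_profile mu (transfer s S k j e).
Proof.
move=> s_prof S0 kS jS e_bnd S' S'0; rewrite /transfer.
have [->|_] := eqVneq S' S; last exact: s_prof.
have [s_ge0 [s_out s_sum]] := s_prof S S0.
split; [|split].
- move=> i; have := s_ge0 i; have := s_ge0 j.
  case: eqVneq => [->|_]; case: eqVneq => [->|_]; lra.
- move=> i iS; have [ij ik] : i != j /\ i != k by split; apply: contraNneq iS => ->.
  by rewrite s_out // (negbTE ij) (negbTE ik); ring.
- by rewrite big_split /= s_sum sumrB !Rsum_indicator subrr Rplus_0_r.
Qed.

End Profiles.

Lemma exists_small_shift (g h : R -> R) x y m :
  continuous_nonneg g -> continuous_nonneg h -> 0 < m <= x -> 0 <= y -> h y < g x ->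
  exists e, 0 < e <= m /\ h (y + e) < g (x - e).
Proof.
move=> g_cont h_cont [m0 mx] y0 hg.
have c0 : 0 < (g x - h y) / 2 by lra.
have [dg [dg0 gd]] := g_cont x ltac:(lra) _ c0.
have [dh [dh0 hd]] := h_cont y y0 _ c0.
pose e := Rmin m (Rmin (dg / 2) (dh / 2)).
have e_le : e <= m /\ e <= dg / 2 /\ e <= dh / 2.
  have := Rmin_l m (Rmin (dg / 2) (dh / 2)); have := Rmin_r m (Rmin (dg / 2) (dh / 2)).
  by have := Rmin_l (dg / 2) (dh / 2); have := Rmin_r (dg / 2) (dh / 2); rewrite -/e; lra.
have e0 : 0 < e by apply: Rmin_glb_lt => //; apply: Rmin_glb_lt; lra.
exists e; split; first lra.
have [_ gx] := Rabs_def2 _ _ (gd (x - e) ltac:(lra) ltac:(rewrite Rabs_left; lra)).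
have [hy _] := Rabs_def2 _ _ (hd (y + e) ltac:(lra) ltac:(rewrite Rabs_pos_eq; lra)).
lra.
Qed.

Section Game.
Variables (n : nat) (f : 'I_n -> R -> R) (mu : {set 'I_n} -> R).
Hypotheses (f_nd : forall j, nondecr_nonneg (f j))
  (f_cont : forall j, continuous_nonneg (f j)).

Definition potential (s : {set 'I_n} -> 'I_n -> R) : R :=
  \big[Rplus/0]_j cost_integral (f j) (load s j).

Lemma potential_sub_le s s' : is_profile mu s' ->
  potential s' - potential s <= \big[Rplus/0]_j ((load s' j - load s j) * cost f s' j).
Proof.
move=> s'_prof; have -> : potential s' - potential s =
    \big[Rplus/0]_j (cost_integral (f j) (load s' j) - cost_integral (f j) (load s j)).
  by rewrite sumrB.
apply: Rsum_le => j _.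
exact: cost_integral_sub_le (f_nd j) (f_cont j) _ _ (load_ge0 _ s'_prof).
Qed.

Lemma potential_minimizer_is_NE s : is_profile mu s ->
  (forall s', is_profile mu s' -> potential s <= potential s') -> is_NE f mu s.
Proof.
move=> s_prof s_min; split=> // S S0 k j sk jS; apply: Rnot_lt_le => cost_jk.
have [_ [s_out _]] := s_prof S S0.
have kS : k \in S by apply: contraT => /s_out sk0; move: sk; rewrite sk0 => /Rlt_irrefl [].
have [e [[e0 e_le] gap]] := exists_small_shift (f_cont k) (f_cont j)
  (conj sk (le_load k s_prof S0)) (load_ge0 j s_prof) cost_jk.
have kj : k != j by apply/eqP => kj; move: cost_jk; rewrite kj => /Rlt_irrefl.
set t := transfer s S k j e.
have t_prof : is_profile mu t by apply: transfer_profile => //; lra.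
have costs_t : cost f t j = f j (load s j + e) /\ cost f t k = f k (load s k - e).
  rewrite /cost !load_transfer // !eqxx (negbTE kj) eq_sym (negbTE kj).
  by split; congr (_ _); ring.
have := potential_sub_le s t_prof; have := s_min t t_prof.
have -> : \big[Rplus/0]_i ((load t i - load s i) * cost f t i) =
    e * cost f t j - e * cost f t k.
  transitivity (\big[Rplus/0]_i ((if i == j then e * cost f t i else 0) -
                                 (if i == k then e * cost f t i else 0))).
    apply: eq_bigr => i _; rewrite load_transfer //.
    by case: eqVneq => _; case: eqVneq => _; ring.
  by rewrite sumrB !Rsum_indicator.
by case: costs_t => -> ->; nra.
Qed.

Lemma NE_is_SNE s : is_NE f mu s -> is_SNE f mu s.
Proof.
move=> [s_prof s_NE]; split=> //.
case=> s' [s'_prof [[T [i [T0 s'_neq]]] s'_dev]].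
have gain_in S k : S != set0 -> s S k < s' S k -> k \in S.
  move=> S0 gain; apply: contraT => /(s'_prof S S0).2.1 s'0.
  by move: gain; rewrite s'0; have := (s_prof S S0).1 k; lra.
have load_drop S k : S != set0 -> s S k < s' S k -> load s' k < load s k.
  move=> S0 gain; have [k' [sk' cost_k']] := s'_dev S S0 k gain.
  have NE_k := s_NE S S0 k' k sk' (gain_in S k S0 gain).
  apply: Rnot_le_lt => le_load; have := f_nd k (load_ge0 k s_prof) le_load.
  by rewrite /cost in cost_k' NE_k; lra.
have load_le k : load s' k <= load s k.
  apply: Rnot_lt_le => lt_load.
  suff [S [S0 gain]] : exists S, S != set0 /\ s S k < s' S k.
    by have := load_drop S k S0 gain; lra.
  apply: NNPP => no_gain; move: lt_load; apply: Rle_not_lt.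
  by apply: Rsum_le => S S0; apply: Rnot_lt_le => gain; apply: no_gain; exists S.
have total : \big[Rplus/0]_k load s' k = \big[Rplus/0]_k load s k.
  by rewrite (sum_load s'_prof) (sum_load s_prof).
have load_eq := Rsum_le_eq_pointwise load_le total.
have no_gain S k : S != set0 -> s' S k <= s S k.
  move=> S0; apply: Rnot_lt_le => gain.
  by have := load_drop S k S0 gain; rewrite load_eq; apply: Rlt_irrefl.
apply: s'_neq; apply: Rsum_le_eq_pointwise (fun k => no_gain T k T0) _ i.
by rewrite (s'_prof T T0).2.2 (s_prof T T0).2.2.
Qed.

End Game.

Lemma continuous_Rsum (T : topologicalType) (I : Type) (r : seq I) (P : pred I)
    (F : I -> T -> R) :
  (forall i, continuous (F i)) -> continuous (fun x => \big[Rplus/0]_(i <- r | P i) F i x).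
Proof.
move=> F_cont; apply: continuous_big => [|i _]; last exact: F_cont.
exact: (@pseudometric_normed_Zmodule.add_continuous _ R^o).
Qed.

Section Minimizer.
Local Open Scope classical_set_scope.
Variables (n : nat) (mu : {set 'I_n} -> R).

Local Notation dim := #|{: {set 'I_n} * 'I_n}|.

Definition profile_of_vec (v : 'rV[R]_dim) S j : R := v ord0 (enum_rank (S, j)).

(* A profile leaves the components of the empty type unconstrained; they are
   cleared so that encoded profiles lie in a bounded set. *)
Definition vec_of_profile (s : {set 'I_n} -> 'I_n -> R) : 'rV[R]_dim :=
  \row_i (if (enum_val i).1 == set0 then 0 else s (enum_val i).1 (enum_val i).2).

Lemma profile_of_vecK s S j :
  S != set0 -> profile_of_vec (vec_of_profile s) S j = s S j.
Proof. by move=> S0; rewrite /profile_of_vec mxE enum_rankK /= (negbTE S0). Qed.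

Lemma load_vec_of_profile s j : load (profile_of_vec (vec_of_profile s)) j = load s j.
Proof. by apply: eq_bigr => S S0; rewrite profile_of_vecK. Qed.

Definition profile_bound (Sj : {set 'I_n} * 'I_n) : R :=
  if Sj.2 \in Sj.1 then Rabs (mu Sj.1) else 0.

Definition feasible : set 'rV[R]_dim :=
  [set v : 'rV[R]_dim | forall i, `[0, profile_bound (enum_val i)] (v ord0 i)] `&`
  \bigcap_(S in [set S | S != set0])
    [set v | \big[Rplus/0]_j profile_of_vec v S j = mu S].

Lemma compact_feasible : compact feasible.
Proof.
apply: compact_closedI.
  exact: (rV_compact (fun i => @segment_compact _ 0 (profile_bound (enum_val i)))).
apply: closed_bigI => S _.
apply: (preimage_closed (f := fun v => \big[Rplus/0]_j profile_of_vec v S j)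
  (D := [set x | x = mu S])) => [v _|]; last exact: closed_eq.
by apply: continuous_Rsum => j; exact: coord_continuous.
Qed.

Lemma feasible_profile v : feasible v -> is_profile mu (profile_of_vec v).
Proof.
move=> [box sums] S S0.
have vbox j : 0 <= profile_of_vec v S j <= profile_bound (S, j).
  have := box (enum_rank (S, j)); rewrite /= enum_rankK in_itv /=.
  by case/andP => /RleP ? /RleP ?.
split; [|split].
- by move=> j; case: (vbox j).
- by move=> j jS; have := vbox j; rewrite /profile_bound /= (negbTE jS); lra.
- exact: sums.
Qed.

Lemma profile_feasible s : is_profile mu s -> feasible (vec_of_profile s).
Proof.
move=> s_prof; split => [i|S S0 /=]; last first.
  by under eq_bigr do rewrite profile_of_vecK //; exact: (s_prof S S0).2.2.
rewrite /= mxE /profile_bound in_itv /=; case: (enum_val i) => S j /=.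
have [->|S0] := eqVneq S set0; first by rewrite inE lexx.
have [s_ge0 [s_out s_sum]] := s_prof S S0.
case: (boolP (j \in S)) => jS; last by rewrite s_out // lexx.
apply/andP; split; apply/RleP; first exact: s_ge0.
apply: Rle_trans (Rle_abs _); rewrite -s_sum (bigD1 j) //= -{1}(Rplus_0_r (s S j)).
by apply/Rplus_le_compat_l/Rsum_ge0 => l _; exact: s_ge0.
Qed.

Lemma exists_profile :
  (forall S, S != set0 -> 0 <= mu S) -> exists s, is_profile mu s.
Proof.
move=> mu_ge0.
exists (fun (S : {set 'I_n}) (j : 'I_n) =>
  if [pick i in S] is Some i then (if j == i then mu S else 0) else 0).
move=> S S0; case: pickP => [i iS|]; last first.
  by case/set0Pn: S0 => x xS /(_ x); rewrite xS.
split; [|split].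
- by move=> j; case: eqVneq => _; [exact: mu_ge0 | exact: Rle_refl].
- by move=> j jS; case: eqVneq => // ji; rewrite ji iS in jS.
- exact: Rsum_indicator.
Qed.

Variable f : 'I_n -> R -> R.
Hypothesis f_cont : forall j, continuous_nonneg (f j).

Lemma continuous_potential : continuous (fun v => potential f (profile_of_vec v)).
Proof.
apply: continuous_Rsum => j v.
apply: (@continuous_comp _ _ _ (fun v => load (profile_of_vec v) j));
  last exact: continuous_cost_integral.
by apply: continuous_Rsum => S; exact: coord_continuous.
Qed.

Lemma exists_potential_minimizer : (forall S, S != set0 -> 0 <= mu S) ->
  exists2 s, is_profile mu s &
    forall s', is_profile mu s' -> potential f s <= potential f s'.
Proof.
move=> mu_ge0; have [s0 s0_prof] := exists_profile mu_ge0.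
have [c c_feas c_min] := EVT_min_rV (ex_intro _ _ (profile_feasible s0_prof))
  compact_feasible (continuous_subspaceT continuous_potential).
exists (profile_of_vec c); first by apply: feasible_profile; rewrite -inE.
move=> s' s'_prof; have /RleP := c_min _ (mem_set (profile_feasible s'_prof)).
by rewrite /potential; under [X in _ <= X -> _]eq_bigr do rewrite load_vec_of_profile.
Qed.

End Minimizer.

Theorem mainTheorem1 (n : nat) (f : 'I_n -> R -> R) (mu : {set 'I_n} -> R) :
  is_game f mu ->
  (forall j : 'I_n, continuous_nonneg (f j)) ->
  exists s : {set 'I_n} -> 'I_n -> R, is_SNE f mu s.
Proof.
move=> [f_nd mu_ge0] f_cont.
have [s s_prof s_min] := exists_potential_minimizer f_cont mu_ge0.
exists s; apply: NE_is_SNE => //.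
exact: potential_minimizer_is_NE.
Qed.
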